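(* Let $\rho = (\mathcal{V}, V, \mathbf{1}, \mathrm{var}, \mathrm{low}, \mathrm{high}, \mathrm{flip})$ be a COBDD with $\mathcal{V} = \mathcal{X} \,\dot\cup\, \mathcal{U}$, $\mathcal X=\{x_1,\dots,x_n\}$, $\mathcal U=\{u_1,\dots,u_r\}$, let $v \in V$ be a node and $b \in \mathbb{B}$ a flipping bit, and let $[\![ v, b]\!] = K(\mathbf{x}, \mathbf{u})$. Then the procedure SolveFunctionalEq$(\rho, v, b)$ outputs nodes $v_1, \ldots, v_r$ and boolean values $b_1, \ldots, b_r$ such that, writing $f_i(\mathbf x) := [\![ v_i, b_i]\!]$ for $i \in \{1,\dots,r\}$ (each $f_i$ depends only on $\mathbf x$), every $\mathbf{x} \in \mathrm{Dom}(K)$ satisfies $K(\mathbf{x}, f_1(\mathbf{x}), \ldots, f_r(\mathbf{x})) = 1$.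
   Context: $\mathbb{B}=\{0,1\}$; $+$, juxtaposition, $\bar{\ }$, $\oplus$ denote OR, AND, complement, XOR; $f|_{y=g}$ denotes substitution of $g$ for variable $y$ in $f$, and $\exists y\, f := f|_{y=0}+f|_{y=1}$. A COBDD is a tuple $\rho = (\mathcal{V}, V, \mathbf{1}, \mathrm{var}, \mathrm{low}, \mathrm{high}, \mathrm{flip})$ with $\mathcal V$ a finite totally ordered set of boolean variables, $V$ a finite set of nodes, $\mathbf 1\in V$ the terminal node, $\mathrm{var}: V\setminus\{\mathbf 1\}\to\mathcal V$, $\mathrm{high},\mathrm{low}: V\setminus\{\mathbf 1\}\to V$, $\mathrm{flip}: V\setminus\{\mathbf 1\}\to\mathbb B$, with variables strictly increasing along edges $v\to\mathrm{high}(v)$, $v\to\mathrm{low}(v)$; COBDDs are assumed reduced (no internal $v$ with $\mathrm{low}(v)=\mathrm{high}(v)$ and $\mathrm{flip}(v)=0$, and no two distinct nodes whose reachable sub-COBDDs are isomorphic). Semantics: $[\![ \mathbf 1, b]\!] := \bar b$ and, for internal $v$ with $\mathrm{var}(v)=y$, $[\![ v,b]\!] := y [\![ \mathrm{high}(v), b]\!] + \bar y [\![ \mathrm{low}(v), b\oplus \mathrm{flip}(v)]\!]$. Every boolean function is represented as $[\![ w,c]\!]$ for some node $w$ and bit $c$ (the COBDD being extended with new nodes as needed). Two operations are assumed available and correct: COBDD_APP, which given variables $y_1,\dots,y_k$, pairs $(w_1,c_1),\dots,(w_k,c_k)$ and $(w,c)$ returns $(w',c')$ with $[\![ w',c']\!]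 = [\![ w,c]\!]|_{y_1=[\![ w_1,c_1]\!],\dots,y_k=[\![ w_k,c_k]\!]}$; and COBDD_EX, which given variables $y_1,\dots,y_k$ and $(w,c)$ returns $(w',c')$ with $[\![ w',c']\!]=\exists y_1,\dots,y_k\,[\![ w,c]\!]$. The procedure SolveFunctionalEq$(\rho,v,b)$: for $i=1,\dots,r$ in order, it computes $(v_i,b_i)$ := COBDD_EX$(u_{i+1},\dots,u_r,$ COBDD_APP$(u_1,\dots,u_i, v_1,b_1,\dots,v_{i-1},b_{i-1},\mathbf 1,0, v,b))$, i.e. $[\![ v_i,b_i]\!] = \exists u_{i+1},\dots,u_r\, K(\mathbf x, [\![ v_1,b_1]\!],\dots,[\![ v_{i-1},b_{i-1}]\!], 1, u_{i+1},\dots,u_r)$ (note $[\![ \mathbf 1,0]\!]=1$); it returns $\langle v_1,b_1,\dots,v_r,b_r\rangle$. $\mathrm{Dom}(K) = \{\mathbf x \mid \exists \mathbf u\; K(\mathbf x,\mathbf u)=1\}$. *)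

From mathcomp Require Import all_boot.
Set Implicit Arguments. Unset Strict Implicit. Unset Printing Implicit Defensive.

(* Variables: X = {x_1..x_n} (inl), U = {u_1..u_r} (inr); index j : 'I_r stands for u_(j+1). *)
Definition cvar (n r : nat) := ('I_n + 'I_r)%type.

(* The total order on the variables is
   given by an injective rank into nat.  [one] is the terminal node 1. The
   fields var/low/high/flip are total functions but only meaningful on
   internal nodes (v != one). *)
Record cobdd (n r : nat) := Cobdd {
  cnode : finType;
  crank : cvar n r -> nat;
  cone  : cnode;
  cvarf : cnode -> cvar n r;
  clow  : cnode -> cnode;
  chigh : cnode -> cnode;
  cflip : cnode -> bool
}.
Arguments crank {n r} c _.
Arguments cone {n r} c.
Arguments cvarf {n r} c _.
Arguments clow {n r} c _.
Arguments chigh {n r} c _.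
Arguments cflip {n r} c _.

Section Cobdd.
Variables (n r : nat) (rho : cobdd n r).
Local Notation V := (cnode rho).

Definition ordered : Prop :=
  injective (crank rho) /\
  forall v : V, v != cone rho ->
    (chigh rho v != cone rho ->
       crank rho (cvarf rho v) < crank rho (cvarf rho (chigh rho v))) /\
    (clow rho v != cone rho ->
       crank rho (cvarf rho v) < crank rho (cvarf rho (clow rho v))).

(* Semantics with fuel; fuel #|V| suffices for an ordered COBDD. *)
Fixpoint sem_fuel (k : nat) (v : V) (b : bool) (a : cvar n r -> bool) : bool :=
  if v == cone rho then ~~ b else
  match k with
  | 0 => false
  | k.+1 => if a (cvarf rho v) then sem_fuel k (chigh rho v) b a
            else sem_fuel k (clow rho v) (b (+) cflip rho v) a
  end.

Definition sem (v : V) (b : bool) (a : cvar n r -> bool) : bool :=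
  sem_fuel #|V| v b a.

Fixpoint iso_fuel (k : nat) (u w : V) : bool :=
  if (u == cone rho) || (w == cone rho) then (u == cone rho) && (w == cone rho) else
  match k with
  | 0 => true
  | k.+1 => [&& cvarf rho u == cvarf rho w, cflip rho u == cflip rho w,
               iso_fuel k (chigh rho u) (chigh rho w) &
               iso_fuel k (clow rho u) (clow rho w)]
  end.

Definition reduced : Prop :=
  (forall v : V, v != cone rho -> clow rho v = chigh rho v -> cflip rho v = true) /\
  (forall u w : V, iso_fuel #|V| u w -> u = w).

Definition upd (a : cvar n r -> bool) (y : cvar n r) (t : bool) : cvar n r -> bool :=
  fun z => if z == y then t else a z.

Fixpoint subst_val (ys : seq (cvar n r)) (ts : seq bool) (a : cvar n r -> bool) :=
  match ys, ts with
  | y :: ys', t :: ts' => upd (subst_val ys' ts' a) y t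
  | _, _ => a
  end.

Fixpoint exists_vars (ys : seq (cvar n r)) (f : (cvar n r -> bool) -> bool)
    (a : cvar n r -> bool) : bool :=
  match ys with
  | [::] => f a
  | y :: ys' => exists_vars ys' f (upd a y false) || exists_vars ys' f (upd a y true)
  end.

Definition app_spec (app : seq (cvar n r) -> seq (V * bool) -> V * bool -> V * bool) : Prop :=
  forall (ys : seq (cvar n r)) (ps : seq (V * bool)) (wc : V * bool),
    uniq ys -> size ys = size ps ->
    forall a, sem (app ys ps wc).1 (app ys ps wc).2 a =
              sem wc.1 wc.2 (subst_val ys [seq sem p.1 p.2 a | p <- ps] a).

Definition ex_spec (ex : seq (cvar n r) -> V * bool -> V * bool) : Prop :=
  forall (ys : seq (cvar n r)) (wc : V * bool), uniq ys ->
    forall a, sem (ex ys wc).1 (ex ys wc).2 a = exists_vars ys (sem wc.1 wc.2) a.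

Definition us : seq (cvar n r) := [seq inr j | j <- enum 'I_r].

(* SolveFunctionalEq(rho, v, b): iteration i (1-based) computes
   (v_i,b_i) := EX(u_{i+1..r}, APP(u_1..u_i, (v_1,b_1)..(v_{i-1},b_{i-1}), (1,0), (v,b))). *)
Section Solve.
Variables (app : seq (cvar n r) -> seq (V * bool) -> V * bool -> V * bool)
          (ex : seq (cvar n r) -> V * bool -> V * bool) (v : V) (b : bool).

Definition solve_step (acc : seq (V * bool)) : V * bool :=
  let i := (size acc).+1 in
  ex (drop i us) (app (take i us) (rcons acc (cone rho, false)) (v, b)).

Fixpoint solve_loop (k : nat) (acc : seq (V * bool)) : seq (V * bool) :=
  match k with
  | 0 => acc
  | k.+1 => solve_loop k (rcons acc (solve_step acc))
  end.

Definition SolveFunctionalEq : seq (V * bool) := solve_loop r [::].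
End Solve.

End Cobdd.

Definition join (n r : nat) (x : 'I_n -> bool) (u : 'I_r -> bool) : cvar n r -> bool :=
  fun z => match z with inl i => x i | inr j => u j end.

(* Write f_i(a) for the value of the i-th output pair.  By the specifications of
   COBDD_APP and COBDD_EX, f_i(a) = exists u_{i+1..r}, K(x, f_1(a), .., f_{i-1}(a), 1, u_{i+1..r}).
   By strong induction on i, f_i depends only on x.  For x in Dom(K) one then builds,
   again by induction on i, a witness u with K(x, u) = 1 and u_j = f_j(x) for j <= i:
   if f_i(x) = 1 the existential defining f_i supplies one, and if f_i(x) = 0 the
   previous witness must already have u_i = 0, since otherwise it would make f_i(x) true. *)

From mathcomp Require Import all_boot.

Set Implicit Arguments. Unset Strict Implicit. Unset Printing Implicit Defensive.

Lemma in_drop_uniq (T : eqType) (s : seq T) x i :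
  uniq s -> x \in s -> (x \in drop i s) = (i <= index x s).
Proof.
move=> s_uniq xs; rewrite leqNgt -in_take //.
have := cat_uniq (take i s) (drop i s); rewrite cat_take_drop s_uniq.
move=> /esym/and3P[_ disj _].
have := mem_cat x (take i s) (drop i s); rewrite cat_take_drop xs.
case: (x \in take i s) / idP => [x_take _ | _ /= <-//].
by apply/negP => x_drop; move/hasP: disj; apply; exists x.
Qed.

Lemma index_take (T : eqType) (s : seq T) x i :
  index x s < i -> index x (take i s) = index x s.
Proof.
case xs: (x \in s) => lt_xi; last first.
  by rewrite take_oversize // -(memNindex (negbT xs)) ltnW.
have := index_cat x (take i s) (drop i s); rewrite cat_take_drop in_take // lt_xi.
by move <-.
Qed.

Section Valuations.
Variables n r : nat.
Implicit Types (ys : seq (cvar n r)) (a : cvar n r -> bool).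

Lemma exists_varsP ys (f : (cvar n r -> bool) -> bool) a :
  (forall a1 a2, a1 =1 a2 -> f a1 = f a2) ->
  reflect (exists2 a', {in [predC ys], a' =1 a} & f a') (exists_vars ys f a).
Proof.
move=> f_ext; apply: (iffP idP).
  elim: ys a => [|y ys IH] a /=; first by exists a.
  case/orP=> /IH[a' a'E fa']; exists a' => // z; rewrite !inE negb_or => /andP[zy zys].
    by rewrite a'E ?inE // /upd (negbTE zy).
  by rewrite a'E ?inE // /upd (negbTE zy).
elim: ys a => [|y ys IH] a [a' a'E fa'] /=.
  by rewrite (f_ext a a') // => z; rewrite a'E.
suff: exists_vars ys f (upd a y (a' y)) by case: (a' y) => ->; rewrite ?orbT.
apply: IH; exists a' => // z; rewrite inE /upd => zys.
case: eqP => [->//|/eqP zy]; by rewrite a'E // !inE negb_or zy.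
Qed.

Lemma exists_vars_eq_on ys (f : (cvar n r -> bool) -> bool) (P : pred (cvar n r)) a1 a2 :
  (forall a1' a2', {in [predU P & ys], a1' =1 a2'} -> f a1' = f a2') ->
  {in P, a1 =1 a2} -> exists_vars ys f a1 = exists_vars ys f a2.
Proof.
elim: ys P a1 a2 => [|y ys IH] P a1 a2 f_loc a12 /=.
  by apply: f_loc => z; rewrite !inE orbF; apply: a12.
have upd_eq t : exists_vars ys f (upd a1 y t) = exists_vars ys f (upd a2 y t).
  apply: (IH [predU pred1 y & P]) => [a1' a2' a12' | z].
    apply: f_loc => z zP; apply: a12'; move: zP.
    by rewrite !inE => /or3P[] ->; rewrite ?orbT.
  by rewrite !inE /upd; case: eqP => //= _; apply: a12.
by rewrite !upd_eq.
Qed.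

Lemma eq_exists_vars ys (f g : (cvar n r -> bool) -> bool) :
  f =1 g -> exists_vars ys f =1 exists_vars ys g.
Proof. by move=> fg; elim: ys => [|y ys IH] a /=; rewrite ?fg ?IH. Qed.

Lemma subst_valE ys ts a z : size ys = size ts ->
  subst_val ys ts a z = if z \in ys then nth false ts (index z ys) else a z.
Proof.
elim: ys ts => [|y ys IH] [|t ts] //= [Es].
by rewrite /upd in_cons IH // eq_sym; case: eqP.
Qed.

Lemma uniq_us : uniq (us n r).
Proof. by rewrite map_inj_uniq ?enum_uniq // => x y []. Qed.

Lemma size_us : size (us n r) = r.
Proof. by rewrite size_map size_enum_ord. Qed.

Lemma mem_us z : (z \in us n r) = if z is inr _ then true else false.
Proof. by case: z => [i|j]; apply/mapP; [case | exists j; rewrite ?mem_enum]. Qed.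

Lemma index_us (j : 'I_r) : index (inr j) (us n r) = j.
Proof. by rewrite index_map ?index_enum_ord // => x y []. Qed.

Lemma mem_take_us k z : (z \in take k (us n r)) = if z is inr j then j < k else false.
Proof.
case: z => [i|j]; last by rewrite in_take ?mem_us ?index_us.
by apply/negP => /mem_take; rewrite mem_us.
Qed.

Lemma mem_drop_us k z : (z \in drop k (us n r)) = if z is inr j then k <= j else false.
Proof.
case: z => [i|j]; last by rewrite in_drop_uniq ?uniq_us ?mem_us ?index_us.
by apply/negP => /mem_drop; rewrite mem_us.
Qed.

Lemma index_take_us k (j : 'I_r) : j < k -> index (inr j) (take k (us n r)) = j.
Proof. by rewrite -{1 2}(index_us j) => /index_take. Qed.

End Valuations.

Lemma sem_ext (n r : nat) (rho : cobdd n r) (v : cnode rho) b a1 a2 :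
  a1 =1 a2 -> sem v b a1 = sem v b a2.
Proof.
move=> a12; rewrite /sem; elim: #|_| v b => [|k IH] v b //=.
by rewrite a12 !IH.
Qed.

Lemma sem_one (n r : nat) (rho : cobdd n r) a : sem (cone rho) false a = true.
Proof. by rewrite /sem; case: #|_| => [|k] /=; rewrite eqxx. Qed.

Section SolveFunctionalEq.
Variables (n r : nat) (rho : cobdd n r).
Variables (app : seq (cvar n r) -> seq (cnode rho * bool) -> cnode rho * bool -> cnode rho * bool)
          (ex : seq (cvar n r) -> cnode rho * bool -> cnode rho * bool)
          (v : cnode rho) (b : bool).
Implicit Types (a : cvar n r -> bool) (x : 'I_n -> bool) (u : 'I_r -> bool).

Local Notation d := (cone rho, false).
Local Notation step := (solve_step app ex v b).
Local Notation out := (SolveFunctionalEq app ex v b).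
Local Notation K := (sem v b).

Definition solve_trace (s : seq (cnode rho * bool)) :=
  forall i, i < size s -> nth d s i = step (take i s).

Lemma solve_trace_nil : solve_trace [::].
Proof. by []. Qed.

Lemma solve_trace_rcons s : solve_trace s -> solve_trace (rcons s (step s)).
Proof.
move=> s_trace i; rewrite size_rcons ltnS nth_rcons -cats1 leq_eqVlt.
case/orP=> [/eqP-> | lt_is]; first by rewrite ltnn eqxx take_size_cat.
by rewrite lt_is takel_cat ?(ltnW lt_is) // s_trace.
Qed.

Lemma solve_loop_trace k s : solve_trace s ->
  size (solve_loop app ex v b k s) = size s + k /\ solve_trace (solve_loop app ex v b k s).
Proof.
elim: k s => [|k IH] s s_trace /=; first by rewrite addn0.
by have [-> ?] := IH _ (solve_trace_rcons s_trace); rewrite size_rcons addSnnS.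
Qed.

Lemma size_solve : size out = r.
Proof. by have [-> _] := @solve_loop_trace r [::] solve_trace_nil. Qed.

Lemma nth_solve i : i < r -> nth d out i = step (take i out).
Proof.
have [sz trace] := @solve_loop_trace r [::] solve_trace_nil.
by move=> lt_ir; apply: trace; rewrite sz.
Qed.

Definition sol (i : nat) a := sem (nth d out i).1 (nth d out i).2 a.

(* The point at which iteration i (counted from 0) of SolveFunctionalEq evaluates K. *)
Definition fix_prefix (i : nat) a : cvar n r -> bool :=
  fun z => if z is inr j then (if j < i then sol j a else (j == i :> nat) || a z) else a z.

Hypotheses (appP : app_spec app) (exP : ex_spec ex).

Lemma subst_val_prefix i a : i < r ->
  subst_val (take i.+1 (us n r)) [seq sem p.1 p.2 a | p <- rcons (take i out) d] a
    =1 fix_prefix i a.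
Proof.
move=> lt_ir z; rewrite subst_valE; last first.
  by rewrite size_takel ?size_us // size_map size_rcons size_take size_solve lt_ir.
rewrite mem_take_us; case: z => [k | j] //=; rewrite ltnS leq_eqVlt orbC.
have nth_vals k : k <= i ->
    nth false [seq sem p.1 p.2 a | p <- rcons (take i out) d] k
    = if k < i then sol k a else true.
  move=> le_ki; rewrite (nth_map d) ?size_rcons ?size_take ?size_solve ?lt_ir //.
  rewrite nth_rcons size_take size_solve lt_ir.
  by case: ltnP => [lt_ki | _]; rewrite ?nth_take ?if_same ?sem_one.
have [lt_ji | le_ij] /= := ltnP j i.
  have le_ji := ltnW lt_ji.
  by rewrite index_take_us // nth_vals // lt_ji.
have [ji | _] //= := eqVneq (j : nat) i.
by rewrite index_take_us ?nth_vals ji ?ltnn.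
Qed.

Lemma sol_step i a : i < r ->
  sol i a = exists_vars (drop i.+1 (us n r)) (fun a' => K (fix_prefix i a')) a.
Proof.
move=> lt_ir; rewrite /sol nth_solve // /step size_take size_solve lt_ir.
rewrite exP ?drop_uniq ?uniq_us //; apply: eq_exists_vars => a'.
rewrite appP ?take_uniq ?uniq_us //; last first.
  by rewrite size_takel ?size_us // size_rcons size_take size_solve lt_ir.
exact/sem_ext/subst_val_prefix.
Qed.

Lemma sol_local i a1 a2 : i < r ->
  (forall k, a1 (inl k) = a2 (inl k)) -> sol i a1 = sol i a2.
Proof.
elim/ltn_ind: i a1 a2 => i IH a1 a2 lt_ir a12; rewrite !sol_step //.
apply: (@exists_vars_eq_on _ _ _ _ [pred z | z \notin us n r])
  => [a1' a2' a12' | [k _ | j]]; [ | exact: a12 | by rewrite inE mem_us].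
apply: sem_ext => -[k | j] /=; first by apply: a12'; rewrite !inE mem_us.
have [lt_ji | le_ij] := ltnP j i.
  by apply: IH => // k; apply: a12'; rewrite !inE mem_us.
have [// | ne_ji] := eqVneq (j : nat) i.
congr (_ || _); apply: a12'.
by rewrite !inE mem_us mem_drop_us /= ltn_neqAle eq_sym ne_ji le_ij.
Qed.

Lemma solP (i : 'I_r) x u0 :
  reflect (exists u, [/\ K (join x u), u i &
                          forall j : 'I_r, j < i -> u j = sol j (join x u0)])
          (sol i (join x u0)).
Proof.
rewrite sol_step //; apply: (iffP (exists_varsP _ _ _)).
- move=> a1 a2 a12; apply: sem_ext => -[k | j] /=; rewrite a12 //.
  by case: ifP => // _; apply: sem_ext.
- case=> a' a'E Ka'; exists (fun j => fix_prefix i a' (inr j)); split => /=.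
  + rewrite -(sem_ext _ _ (_ : fix_prefix i a' =1 _)) // => -[k | j] //=.
    by rewrite a'E // !inE mem_drop_us.
  + by rewrite ltnn eqxx.
  + move=> j lt_ji; rewrite lt_ji; apply: sol_local => // k.
    by rewrite a'E // !inE mem_drop_us.
case=> u [Ku ui u_prefix]; exists (join x (fun j => if i < j then u j else u0 j)).
  by move=> [k | j] //; rewrite !inE mem_drop_us /= => /negbTE ->.
rewrite (sem_ext _ _ (_ : fix_prefix i _ =1 join x u)) // => -[k | j] //=.
have [lt_ji | le_ij] := ltnP j i.
  by rewrite u_prefix //; apply: sol_local.
have [ji | ne_ji] := eqVneq (j : nat) i; first by rewrite (val_inj ji).
by rewrite ltn_neqAle eq_sym ne_ji le_ij.
Qed.

Lemma solve_prefix_witness x u0 i : i <= r -> (exists u, K (join x u)) ->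
  exists u, K (join x u) /\ forall j : 'I_r, j < i -> u j = sol j (join x u0).
Proof.
move=> + dom; elim: i => [_ | i IH lt_ir]; first by case: dom => u Ku; exists u.
have [w [Kw w_prefix]] := IH (ltnW lt_ir).
pose i' := Ordinal lt_ir.
have extend u : (forall j : 'I_r, j < i -> u j = sol j (join x u0)) ->
    u i' = sol i' (join x u0) -> forall j : 'I_r, j < i.+1 -> u j = sol j (join x u0).
  move=> u_prefix ui j; rewrite ltnS leq_eqVlt => /orP[/eqP ji | ]; last exact: u_prefix.
  by have -> : j = i' by apply: val_inj.
case sol_i: (sol i' (join x u0)).
  have /solP[u [Ku ui u_prefix]] := sol_i.
  by exists u; split=> //; apply: extend; rewrite ?ui ?sol_i.
exists w; split=> //; apply: extend; rewrite ?sol_i //.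
by apply: contraFF sol_i => wi; apply/solP; exists w.
Qed.

End SolveFunctionalEq.

Theorem lemma2 (n r : nat) (rho : cobdd n r)
  (app : seq (cvar n r) -> seq (cnode rho * bool) -> cnode rho * bool -> cnode rho * bool)
  (ex : seq (cvar n r) -> cnode rho * bool -> cnode rho * bool)
  (v : cnode rho) (b : bool) :
  ordered rho -> reduced rho -> app_spec app -> ex_spec ex ->
  let out := SolveFunctionalEq app ex v b in
  let K := sem v b in
  let f := fun (i : 'I_r) (a : cvar n r -> bool) =>
             sem (nth (cone rho, false) out i).1 (nth (cone rho, false) out i).2 a in
  size out = r /\
  (forall (i : 'I_r) (x : 'I_n -> bool) (u u' : 'I_r -> bool),
      f i (join x u) = f i (join x u')) /\
  (forall (x : 'I_n -> bool) (u0 : 'I_r -> bool),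
      (exists u : 'I_r -> bool, K (join x u)) ->
      K (join x (fun i => f i (join x u0)))).
Proof.
move=> _ _ appP exP out K f; split; first exact: size_solve.
split=> [i x u u' | x u0 dom]; first exact: sol_local.
have [u [Ku u_sol]] := solve_prefix_witness appP exP u0 (leqnn r) dom.
by rewrite /K (sem_ext _ _ (_ : _ =1 join x u)) // => -[k | j] //=; rewrite u_sol.
Qed.
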